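(* Let $C$ be a locally optimal coloring of $E(K_n)$. Then for every color $i$ and every edge $uv$ of color $i$, we have $a_{u,i}+a_{v,i}\le 3$. Consequently every color class of $C$ is a vertex-disjoint union of single edges and paths with two edges.
   Context: A coloring is any map $C:E(K_n)\to\{1,\dots,n-1\}$, not necessarily proper ($n\ge 2$). For a vertex $u$ and color $\mu$, $a_{u,\mu}$ is the number of $\mu$-colored edges incident with $u$, and $\Psi(C)=\sum_{u,\mu}\binom{a_{u,\mu}}{2}$. A coloring $C$ is locally optimal if every coloring $C'$ that differs from $C$ on exactly one edge satisfies $\Psi(C')\ge \Psi(C)$. *)

From mathcomp Require Import all_boot.
Set Implicit Arguments. Unset Strict Implicit. Unset Printing Implicit Defensive.

Definition edge (n : nat) := {e : {set 'I_n} | #|e| == 2}.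

(* Colors {1,...,n-1} are represented by 'I_(n.-1) (i.e. {0,...,n-2}). *)
Definition coloring (n : nat) := {ffun edge n -> 'I_(n.-1)}.

Definition adeg n (C : coloring n) (u : 'I_n) (mu : 'I_(n.-1)) : nat :=
  #|[set e : edge n | (u \in val e) && (C e == mu)]|.

Definition Psi n (C : coloring n) : nat :=
  \sum_(u : 'I_n) \sum_(mu : 'I_(n.-1)) 'C(adeg C u mu, 2).

Definition differ_one n (C C' : coloring n) : Prop :=
  #|[set e : edge n | C e != C' e]| = 1.

Definition locally_optimal n (C : coloring n) : Prop :=
  forall C' : coloring n, differ_one C C' -> Psi C <= Psi C'.

Definition color_class n (C : coloring n) (i : 'I_(n.-1)) : {set edge n} :=
  [set e | C e == i].

Definition edge_or_P3 n (B : {set edge n}) : Prop :=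
  #|B| = 1 \/
  exists e1 e2 : edge n, [/\ B = [set e1; e2], e1 != e2 &
                           #|val e1 :&: val e2| = 1].

Definition disjoint_union_edges_P3 n (F : {set edge n}) : Prop :=
  exists P : {set {set edge n}},
    [/\ partition P F,
        (forall B, B \in P -> edge_or_P3 B) &
        (forall B1 B2, B1 \in P -> B2 \in P -> B1 != B2 ->
           forall e1 e2, e1 \in B1 -> e2 \in B2 -> [disjoint val e1 & val e2])].

From mathcomp Require Import all_boot.
From mathcomp Require Import zify.
Set Implicit Arguments. Unset Strict Implicit. Unset Printing Implicit Defensive.

(* Recolouring an edge uv of colour i to a colour j != i changes Psi by
   (a_{u,j} + 1) + (a_{v,j} + 1) - a_{u,i} - a_{v,i}, so local optimality gives
   a_{u,i} + a_{v,i} <= a_{u,j} + a_{v,j} + 2.  If a_{u,i} + a_{v,i} >= 4, every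
   other colour then contributes at least 2 to deg u + deg v, and summing over
   all n - 1 colours gives deg u + deg v >= 4 + 2(n - 2) > 2(n - 1).
   The resulting bound forbids three edges f, g, h of one colour with f meeting
   g and g meeting h, so sharing a vertex is an equivalence relation on a colour
   class, and its blocks are single edges or paths with two edges. *)

Section Edges.
Variable n : nat.

Lemma card_edge (f : edge n) : #|val f| = 2.
Proof. exact/eqP/(valP f). Qed.

Lemma edge_endpoints (f : edge n) w :
  w \in val f -> exists2 x, x != w & val f = [set w; x].
Proof.
move=> wf.
have : #|val f :\ w| == 1.
  by have := cardsD1 w (val f); rewrite wf card_edge add1n => -[<-].
case/cards1P=> x fDw.
have : x \in val f :\ w by rewrite fDw set11.
rewrite in_setD1 => /andP[xw _].
by exists x; rewrite // -(setD1K wf) fDw.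
Qed.

Lemma card_incident_edges w : #|[set f : edge n | w \in val f]| <= n.-1.
Proof.
rewrite -(card_in_imset (f := fun f : edge n => val f :\ w)); last first.
  move=> f g; rewrite !inE => wf wg fg.
  by apply: val_inj; rewrite -(setD1K wf) -(setD1K wg) fg.
have <- : #|[set~ w]| = n.-1 by rewrite cardsC1 card_ord.
apply: leq_trans (leq_imset_card (fun x => [set x]) _).
apply: subset_leq_card; apply/subsetP => A /imsetP[f]; rewrite inE => wf ->.
have [x xw ->] := edge_endpoints wf.
by rewrite setU1K ?inE 1?eq_sym // imset_f // !inE.
Qed.

Definition meets (f g : edge n) := ~~ [disjoint val f & val g].

Lemma meets_refl (f : edge n) : meets f f.
Proof. by rewrite /meets -setI_eq0 setIid -card_gt0 card_edge. Qed.

Lemma meets_sym (f g : edge n) : meets f g = meets g f.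
Proof. by rewrite /meets disjoint_sym. Qed.

Lemma meetsP (f g : edge n) :
  reflect (exists2 w, w \in val f & w \in val g) (meets f g).
Proof.
rewrite /meets -setI_eq0; apply: (iffP (set0Pn _)) => [[w]|[w wf wg]].
  by rewrite inE => /andP[]; exists w.
by exists w; rewrite inE wf.
Qed.

Lemma card_meet (f g : edge n) :
  f != g -> meets f g -> #|val f :&: val g| = 1.
Proof.
move=> fg /meetsP[w wf wg]; apply/eqP; rewrite eqn_leq card_gt0 andbC.
apply/andP; split; first by apply/set0Pn; exists w; rewrite inE wf.
rewrite leqNgt; apply: contra fg => fgI.
have eqI (h : edge n) : val f :&: val g \subset val h -> val f :&: val g = val h.
  by move=> sub; apply/eqP; rewrite eqEcard sub card_edge.
by apply/eqP/val_inj; rewrite -(eqI f) ?subsetIl // (eqI g) ?subsetIr.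
Qed.

End Edges.

Section ChainFree.
Variables (n : nat) (F : {set edge n}).
Hypothesis chain_free : forall f g h, f \in F -> g \in F -> h \in F ->
  f != g -> g != h -> f != h -> meets f g -> meets g h -> False.

Lemma meets_equivalence : {in F & &, equivalence_rel (@meets n)}.
Proof.
have meets_trans f g h : f \in F -> g \in F -> h \in F ->
    meets f g -> meets g h -> meets f h.
  move=> fF gF hF fg gh.
  have [-> //|nfg] := eqVneq f g; have [<- //|ngh] := eqVneq g h.
  have [-> //|nfh] := eqVneq f h; first exact: meets_refl.
  by case: (chain_free fF gF hF nfg ngh nfh fg gh).
move=> f g h fF gF hF; split; first exact: meets_refl.
move=> fg; apply/idP/idP; last exact: meets_trans fg.
by apply: meets_trans; rewrite // meets_sym.
Qed.

Let P := equivalence_partition (@meets n) F.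

Lemma mem_block B f : B \in P -> f \in B -> f \in F.
Proof.
move=> BP fB; have /and3P[/eqP <- _ _] := equivalence_partitionP meets_equivalence.
by apply/bigcupP; exists B.
Qed.

Lemma mem_block_meets B f g : B \in P -> f \in B -> g \in F -> (g \in B) = meets f g.
Proof.
move=> BP fB gF; have /and3P[_ trP _] := equivalence_partitionP meets_equivalence.
by rewrite -(def_pblock trP BP fB) (pblock_equivalence_partition meets_equivalence)
  // (mem_block BP fB).
Qed.

Lemma block_edge_or_P3 B : B \in P -> edge_or_P3 B.
Proof.
rewrite /edge_or_P3 => BP; have /and3P[_ _ nP0] := equivalence_partitionP meets_equivalence.
have /set0Pn[e eB] : B != set0 by apply: contraNneq nP0 => <-.
have eF := mem_block BP eB.
have [/existsP[f /andP[fB fe]]|/existsPn single] := boolP [exists f in B, f != e].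
  have fF := mem_block BP fB.
  have ef : meets e f by rewrite -(mem_block_meets BP eB fF).
  have nef : e != f by rewrite eq_sym.
  right; exists e, f; split; rewrite ?card_meet //.
  apply/setP => k; rewrite !inE; apply/idP/idP => [kB|]; last first.
    by case/orP => /eqP kE; subst k.
  have kF := mem_block BP kB.
  apply/contraT; rewrite negb_or => /andP[ke kf].
  have ek : meets e k by rewrite -(mem_block_meets BP eB kF).
  by exfalso; apply: (chain_free fF eF kF fe); rewrite 1?eq_sym // meets_sym.
left; suff -> : B = [set e] by rewrite cards1.
apply/setP => k; rewrite inE; apply/idP/eqP => [kB|-> //].
by apply/eqP; move: (single k); rewrite kB negbK.
Qed.

Lemma blocks_disjoint B1 B2 : B1 \in P -> B2 \in P -> B1 != B2 ->
  forall e1 e2, e1 \in B1 -> e2 \in B2 -> [disjoint val e1 & val e2].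
Proof.
move=> B1P B2P B12 e1 e2 e1B1 e2B2; apply: contraR B12 => e12.
have /and3P[_ trP _] := equivalence_partitionP meets_equivalence.
have e2B1 : e2 \in B1 by rewrite (mem_block_meets B1P e1B1 (mem_block B2P e2B2)).
by rewrite -(def_pblock trP B1P e2B1) (def_pblock trP B2P e2B2).
Qed.

Lemma chain_free_disjoint_union : disjoint_union_edges_P3 F.
Proof.
exists P; split; [exact: equivalence_partitionP meets_equivalence|..].
  exact: block_edge_or_P3.
exact: blocks_disjoint.
Qed.

End ChainFree.

Section Degrees.
Variables (n : nat) (C : coloring n).

Lemma adeg_gt0 (f : edge n) w : w \in val f -> 0 < adeg C w (C f).
Proof. by move=> wf; rewrite card_gt0; apply/set0Pn; exists f; rewrite inE wf eqxx. Qed.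

Lemma card_le_adeg (S : {set edge n}) w i :
  (forall f, f \in S -> (w \in val f) && (C f == i)) -> #|S| <= adeg C w i.
Proof. by move=> HS; apply/subset_leq_card/subsetP => f /HS; rewrite inE. Qed.

Lemma adeg_ge2 (f g : edge n) w i : f != g -> w \in val f -> w \in val g ->
  C f = i -> C g = i -> 1 < adeg C w i.
Proof.
move=> fg wf wg Cf Cg; have := card_le_adeg (S := [set f; g]) (w := w) (i := i).
rewrite cards2 fg; apply=> k; rewrite !inE => /orP[] /eqP kE; subst k.
  by rewrite wf Cf eqxx.
by rewrite wg Cg eqxx.
Qed.

Lemma adeg_ge3 (f g h : edge n) w i : f != g -> g != h -> f != h ->
  w \in val f -> w \in val g -> w \in val h ->
  C f = i -> C g = i -> C h = i -> 2 < adeg C w i.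
Proof.
move=> fg gh fh wf wg wh Cf Cg Ch.
have := card_le_adeg (S := f |: [set g; h]) (w := w) (i := i).
rewrite cardsU1 cards2 !inE negb_or fg fh gh; apply=> k.
rewrite !inE => /or3P[] /eqP kE; subst k.
- by rewrite wf Cf eqxx.
- by rewrite wg Cg eqxx.
by rewrite wh Ch eqxx.
Qed.

Lemma sum_adeg w : \sum_(mu : 'I_(n.-1)) adeg C w mu = #|[set f : edge n | w \in val f]|.
Proof.
rewrite -sum1_card (partition_big C predT) //=; apply: eq_bigr => mu _.
by rewrite /adeg -sum1_card; apply: eq_bigl => f; rewrite !inE.
Qed.

Lemma sum_adeg_le w : \sum_(mu : 'I_(n.-1)) adeg C w mu <= n.-1.
Proof. by rewrite sum_adeg card_incident_edges. Qed.

End Degrees.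

Section Recolor.
Variables (n : nat) (C : coloring n) (e : edge n) (i j : 'I_(n.-1)).
Hypotheses (Ce : C e = i) (ji : j != i).

Definition recolor : coloring n := [ffun f => if f == e then j else C f].

Definition Psi_at (D : coloring n) w := \sum_(mu : 'I_(n.-1)) 'C(adeg D w mu, 2).

Lemma recolor_differ_one : differ_one C recolor.
Proof.
rewrite /differ_one (_ : [set f | C f != recolor f] = [set e]) ?cards1 //.
apply/setP => f; rewrite !inE ffunE; have [->|_] := eqVneq f e; last by rewrite eqxx.
by rewrite Ce eq_sym ji.
Qed.

Lemma adeg_recolor_out w mu : w \notin val e -> adeg recolor w mu = adeg C w mu.
Proof.
move=> we; apply: eq_card => f; rewrite !inE ffunE.
by have [->|] := eqVneq f e; rewrite ?(negbTE we).
Qed.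

Lemma adeg_recolor_old w : w \in val e -> (adeg recolor w i).+1 = adeg C w i.
Proof.
move=> we; rewrite /adeg [in RHS](cardsD1 e) !inE we Ce eqxx add1n; congr _.+1.
apply: eq_card => f; rewrite !inE ffunE.
by have [->|] := eqVneq f e; rewrite ?(negbTE ji) ?andbF.
Qed.

Lemma adeg_recolor_new w : w \in val e -> adeg recolor w j = (adeg C w j).+1.
Proof.
move=> we; transitivity #|e |: [set f : edge n | (w \in val f) && (C f == j)]|.
  by apply: eq_card => f; rewrite !inE ffunE; have [->|] := eqVneq f e; rewrite ?we ?eqxx.
by rewrite cardsU1 inE Ce eq_sym (negbTE ji) andbF.
Qed.

Lemma adeg_recolor_other w mu : mu != i -> mu != j -> adeg recolor w mu = adeg C w mu.
Proof.
move=> mi mj; apply: eq_card => f; rewrite !inE ffunE.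
have [fe|//] := eqVneq f e; subst f; rewrite Ce.
by rewrite [j == _]eq_sym [i == _]eq_sym (negbTE mi) (negbTE mj) !andbF.
Qed.

Lemma Psi_at_recolor w : w \in val e ->
  Psi_at recolor w + adeg C w i = Psi_at C w + (adeg C w j).+1.
Proof.
move=> we; rewrite /Psi_at (bigD1 i) // [in RHS](bigD1 i) //=.
rewrite (bigD1 j) ?ji // [in RHS](bigD1 j) ?ji //=.
rewrite (eq_bigr (fun mu => 'C(adeg C w mu, 2))) => [|mu /andP[mi mj]]; last first.
  by rewrite adeg_recolor_other.
rewrite -(adeg_recolor_old we) adeg_recolor_new // !binS !bin1; lia.
Qed.

Lemma Psi_recolor u v : val e = [set u; v] -> u != v ->
  Psi recolor + (adeg C u i + adeg C v i) =
  Psi C + ((adeg C u j).+1 + (adeg C v j).+1).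
Proof.
move=> he uv.
have sum_e (a : 'I_n -> nat) :
    \sum_(w < n) (if w \in val e then a w else 0) = a u + a v.
  by rewrite -big_mkcond he big_setU1 ?inE //= big_set1.
rewrite -(sum_e (fun w => adeg C w i)) -(sum_e (fun w => (adeg C w j).+1)).
rewrite /Psi -!big_split; apply: eq_bigr => w _ /=.
case: ifP => [/Psi_at_recolor|/negbT we]; rewrite ?addn0 //.
by apply: eq_bigr => mu _; rewrite adeg_recolor_out.
Qed.

End Recolor.

Definition endpoint_adeg_le3 n (C : coloring n) : Prop :=
  forall (i : 'I_(n.-1)) (u v : 'I_n) (e : edge n),
    val e = [set u; v] -> u != v -> C e = i -> adeg C u i + adeg C v i <= 3.

Lemma locally_optimal_adeg_le3 n (C : coloring n) :
  locally_optimal C -> endpoint_adeg_le3 C.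
Proof.
move=> LO i u v e he uv Ce; rewrite leqNgt; apply/negP => big_i.
have other_ge2 j : j != i -> 2 <= adeg C u j + adeg C v j.
  move=> ji; have := LO _ (recolor_differ_one Ce ji).
  have := Psi_recolor Ce ji he uv; lia.
have n_gt1 : 0 < n.-1 by apply: leq_ltn_trans (ltn_ord i).
have : adeg C u i + adeg C v i + (n.-1).-1 * 2 <=
       \sum_mu (adeg C u mu + adeg C v mu).
  rewrite (bigD1 i) //= leq_add2l.
  apply: (@leq_trans (\sum_(mu < n.-1 | mu != i) 2)); last exact: leq_sum other_ge2.
  by rewrite sum_nat_const cardC1 card_ord.
rewrite big_split /=; have := sum_adeg_le C u; have := sum_adeg_le C v.
by move: (\sum_mu adeg C u mu) (\sum_mu adeg C v mu) => a b; lia.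
Qed.

Lemma adeg_le3_chain_free n (C : coloring n) (i : 'I_(n.-1)) :
  endpoint_adeg_le3 C ->
  forall f g h, f \in color_class C i -> g \in color_class C i ->
    h \in color_class C i -> f != g -> g != h -> f != h ->
    meets f g -> meets g h -> False.
Proof.
move=> le3 f g h; rewrite !inE => /eqP Cf /eqP Cg /eqP Ch fg gh fh.
move=> /meetsP[w wf wg] /meetsP[x xg xh].
have [y yw gwy] := edge_endpoints wg.
have wy : w != y by rewrite eq_sym.
have := le3 _ _ _ _ gwy wy Cg.
move: xg; rewrite gwy !inE => /orP[] /eqP xE; subst x.
  have := adeg_ge3 fg gh fh wf wg xh Cf Cg Ch.
  have := adeg_gt0 C (f := g) (w := y); rewrite gwy !inE eqxx orbT Cg; lia.
have := adeg_ge2 fg wf wg Cf Cg.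
have := adeg_ge2 gh _ xh Cg Ch; rewrite gwy !inE eqxx orbT => /(_ isT); lia.
Qed.

Theorem lemma1 (n : nat) (hn : 2 <= n) (C : coloring n) :
  locally_optimal C ->
  (forall (i : 'I_(n.-1)) (u v : 'I_n) (e : edge n),
      val e = [set u; v] -> u != v -> C e = i ->
      adeg C u i + adeg C v i <= 3) /\
  (forall i : 'I_(n.-1), disjoint_union_edges_P3 (color_class C i)).
Proof.
move=> LO; have le3 := locally_optimal_adeg_le3 LO; split => // i.
exact/chain_free_disjoint_union/adeg_le3_chain_free.
Qed.
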